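(* Suppose for each $0\le t\le N-1$ a bias function $h^e_t$ for the cost $f_t+g_t$ exists, and let $\{x^*_t\}_{t=0}^N$ be the optimal state trajectory of the offline problem with optimal cost $J^*$. Then $$\sum_{t=0}^{N-1}\lambda^e_t-J^*\le\sum_{t=1}^N\big(h^e_{t-1}(x^*_t)-h^e_t(x^*_t)\big)-h^e_0(x_0)=\sum_{t=0}^N\big(h^e_{t-1}(x^*_t)-h^e_t(x^*_t)\big),$$ where $h^e_N:=f_N$, $h^e_{-1}:\equiv0$ and $x^*_0:=x_0$.
   Context: Dynamics $x_{t+1}=Ax_t+Bu_t$ with given $x_0$; cost $J=\sum_{t=0}^{N-1}[f_t(x_t)+g_t(u_t)]+f_N(x_N)$ with $f_t$ strongly convex and smooth, $g_t$ convex and smooth. For each $t$, the optimal steady state is $(x^e_t,u^e_t)=\arg\min\{f_t(x)+g_t(u):x=Ax+Bu\}$ and $\lambda^e_t=f_t(x^e_t)+g_t(u^e_t)$. A bias function for $f_t+g_t$ is a function $h^e_t:\mathbb R^n\to\mathbb R$ with $h^e_t(x)+\lambda^e_t=\min_u\big(f_t(x)+g_t(u)+h^e_t(Ax+Bu)\big)$ for all $x$. *)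

From HB Require Import structures.
From mathcomp Require Import all_boot all_order all_algebra.
Set Implicit Arguments. Unset Strict Implicit. Unset Printing Implicit Defensive.
Import Order.TTheory GRing.Theory Num.Theory.
Local Open Scope ring_scope.

Section Defs.
Variable R : rcfType.

Definition dotv k (x y : 'cV[R]_k) : R := \sum_(i < k) x i 0 * y i 0.
Definition sqnorm k (x : 'cV[R]_k) : R := dotv x x.
Definition normv k (x : 'cV[R]_k) : R := Num.sqrt (sqnorm x).

Definition has_gradient k (f : 'cV[R]_k -> R) (df : 'cV[R]_k -> 'cV[R]_k) :=
  forall x eps, 0 < eps -> exists2 d, 0 < d &
    forall y, normv (y - x) < d ->
      `|f y - f x - dotv (df x) (y - x)| <= eps * normv (y - x).

Definition smooth k (f : 'cV[R]_k -> R) :=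
  exists df, has_gradient f df /\
    exists L, forall x y, normv (df x - df y) <= L * normv (x - y).

Definition convex k (f : 'cV[R]_k -> R) :=
  forall x y (th : R), 0 <= th <= 1 ->
    f (th *: x + (1 - th) *: y) <= th * f x + (1 - th) * f y.

Definition strongly_convex k (f : 'cV[R]_k -> R) :=
  exists2 mu : R, 0 < mu & forall x y (th : R), 0 <= th <= 1 ->
    f (th *: x + (1 - th) *: y) <=
      th * f x + (1 - th) * f y - mu / 2%:R * th * (1 - th) * sqnorm (x - y).

Definition feasible n m (A : 'M[R]_n) (B : 'M[R]_(n, m)) (N : nat)
  (x0 : 'cV[R]_n) (x : nat -> 'cV[R]_n) (u : nat -> 'cV[R]_m) :=
  x 0%N = x0 /\ forall t, (t < N)%N -> x t.+1 = A *m x t + B *m u t.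

Definition cost n m (N : nat) (f : nat -> 'cV[R]_n -> R) (g : nat -> 'cV[R]_m -> R)
  (x : nat -> 'cV[R]_n) (u : nat -> 'cV[R]_m) : R :=
  \sum_(t < N) (f t (x t) + g t (u t)) + f N (x N).

Definition offline_optimal n m (A : 'M[R]_n) (B : 'M[R]_(n, m)) (N : nat)
  (x0 : 'cV[R]_n) f g (xs : nat -> 'cV[R]_n) (us : nat -> 'cV[R]_m) :=
  feasible A B N x0 xs us /\
  forall x u, feasible A B N x0 x u -> cost N f g xs us <= cost N f g x u.

Definition optimal_steady_state n m (A : 'M[R]_n) (B : 'M[R]_(n, m))
  (ft : 'cV[R]_n -> R) (gt : 'cV[R]_m -> R) (xe : 'cV[R]_n) (ue : 'cV[R]_m) :=
  xe = A *m xe + B *m ue /\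
  forall x u, x = A *m x + B *m u -> ft xe + gt ue <= ft x + gt u.

(* h is a bias function for ft + gt with constant lam:
   h x + lam = min_u (ft x + gt u + h (A x + B u)) for all x
   (the minimum is attained). *)
Definition bias_function n m (A : 'M[R]_n) (B : 'M[R]_(n, m))
  (ft : 'cV[R]_n -> R) (gt : 'cV[R]_m -> R) (lam : R) (h : 'cV[R]_n -> R) :=
  forall x,
    (forall u, h x + lam <= ft x + gt u + h (A *m x + B *m u)) /\
    exists u, h x + lam = ft x + gt u + h (A *m x + B *m u).

(* hext h f N t = h^e_t, with the convention h^e_N := f_N. *)
Definition hext n (N : nat) (h : nat -> 'cV[R]_n -> R) (f : nat -> 'cV[R]_n -> R)
  (t : nat) : 'cV[R]_n -> R := if t == N then f N else h t.

(* hprev h f N t = h^e_{t-1}, with h^e_{-1} :== 0 and h^e_N := f_N. *)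
Definition hprev n (N : nat) (h : nat -> 'cV[R]_n -> R) (f : nat -> 'cV[R]_n -> R)
  (t : nat) : 'cV[R]_n -> R :=
  match t with 0%N => fun _ => 0 | s.+1 => hext N h f s end.

End Defs.

From HB Require Import structures.
From mathcomp Require Import all_boot all_order all_algebra.
Import Order.TTheory GRing.Theory Num.Theory.
From mathcomp Require Import lra.
Local Open Scope ring_scope.

(* The Bellman-type inequality defining a bias function h_t, evaluated at a
   state x_t with the control u_t actually applied, gives
       lambda_t <= f_t(x_t) + g_t(u_t) + h_t(x_{t+1}) - h_t(x_t).
   Summing over t < N along any feasible trajectory (in particular the
   offline optimal one) bounds sum_t lambda_t - J by
   sum_{t<N} (h_t(x_{t+1}) - h_t(x_t)) - f_N(x_N)  (lemma [sum_stage_bound]).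
   The rest is bookkeeping: with H_t := h^e_t(x_t), where h^e_N = f_N, the
   sums sum_{t<N} H_{t+1} + H_0 and sum_{t<N} H_t + H_N agree, which turns
   the bound into the paper's form (lemma [bias_telescope]); finally the
   isolated term -h_0(x_0) is the t = 0 summand when x*_0 := x_0 and
   h^e_{-1} := 0 (lemma [bias_sum_from0]). *)

Section BiasBound.
Variables (R : rcfType) (n m : nat) (A : 'M[R]_n) (B : 'M[R]_(n, m)).

Lemma bias_step (ft : 'cV[R]_n -> R) (gt : 'cV[R]_m -> R) (lam : R)
    (hb : 'cV[R]_n -> R) (x : 'cV[R]_n) (u : 'cV[R]_m) :
  bias_function A B ft gt lam hb ->
  lam <= ft x + gt u + hb (A *m x + B *m u) - hb x.
Proof. by move=> /(_ x) [/(_ u) hle _]; rewrite lerBrDr addrC. Qed.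

Lemma sum_stage_bound (N : nat) (x0 : 'cV[R]_n)
    (f : nat -> 'cV[R]_n -> R) (g : nat -> 'cV[R]_m -> R)
    (lam : nat -> R) (h : nat -> 'cV[R]_n -> R)
    (x : nat -> 'cV[R]_n) (u : nat -> 'cV[R]_m) :
  feasible A B N x0 x u ->
  (forall t, (t < N)%N -> bias_function A B (f t) (g t) (lam t) (h t)) ->
  \sum_(t < N) lam t - cost N f g x u <=
    \sum_(t < N) (h t (x t.+1) - h t (x t)) - f N (x N).
Proof.
move=> [_ hdyn] hbias.
have hsum : \sum_(t < N) lam t <=
    \sum_(t < N) (f t (x t) + g t (u t)) + \sum_(t < N) (h t (x t.+1) - h t (x t)).
  rewrite -big_split /=; apply: ler_sum => t _.
  by rewrite addrA hdyn //; apply: bias_step; apply: hbias.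
rewrite /cost; lra.
Qed.

End BiasBound.

Section BiasBookkeeping.
Variables (R : rcfType) (n N : nat) (h f : nat -> 'cV[R]_n -> R).
Hypothesis N_gt0 : (0 < N)%N.

Lemma hext_lt (t : nat) : (t < N)%N -> hext N h f t = h t.
Proof. by move=> ltN; rewrite /hext (ltn_eqF ltN). Qed.

Lemma hext_N : hext N h f N = f N.
Proof. by rewrite /hext eqxx. Qed.

Lemma bias_telescope (x : nat -> 'cV[R]_n) :
  \sum_(t < N) (h t (x t.+1) - h t (x t)) - f N (x N) =
    \sum_(1 <= t < N.+1) (hprev N h f t (x t) - hext N h f t (x t)) - h 0%N (x 0%N).
Proof.
pose H t := hext N h f t (x t).
have first_last : \sum_(t < N) H t.+1 + H 0%N = \sum_(t < N) H t + H N.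
  have := @big_ord_recl R 0 +%R N (fun t : 'I_N.+1 => H t).
  rewrite big_ord_recr /= => ->; rewrite addrC.
  by congr (_ + _); apply: eq_bigr.
have H0 : H 0%N = h 0%N (x 0%N) by rewrite /H hext_lt.
have HN : H N = f N (x N) by rewrite /H hext_N.
have Hlt : \sum_(t < N) h t (x t) = \sum_(t < N) H t.
  by apply: eq_bigr => t _; rewrite /H hext_lt.
rewrite big_add1 /= big_mkord.
under [in RHS]eq_bigr => t _ do rewrite /= hext_lt //.
rewrite !sumrB Hlt -H0 -HN; lra.
Qed.

(* Absorbing -h_0(x_0) as the t = 0 summand, using h^e_{-1} = 0. *)
Lemma bias_sum_from0 (x : nat -> 'cV[R]_n) (x0 : 'cV[R]_n) :
  let x' := fun t : nat => if t == 0%N then x0 else x t in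
  \sum_(1 <= t < N.+1) (hprev N h f t (x t) - hext N h f t (x t)) - h 0%N x0 =
    \sum_(0 <= t < N.+1) (hprev N h f t (x' t) - hext N h f t (x' t)).
Proof.
move=> x'; rewrite [RHS]big_ltn // /x' /= hext_lt // sub0r addrC.
by congr (_ + _); apply: eq_big_nat => t /andP[t_gt0 _]; rewrite -(prednK t_gt0).
Qed.

End BiasBookkeeping.

Theorem lemma3 (R : rcfType) (n m N : nat)
  (hN : (0 < N)%N)
  (A : 'M[R]_n) (B : 'M[R]_(n, m)) (x0 : 'cV[R]_n)
  (f : nat -> 'cV[R]_n -> R) (g : nat -> 'cV[R]_m -> R)
  (hf_sc : forall t, (t <= N)%N -> strongly_convex (f t))
  (hf_sm : forall t, (t <= N)%N -> smooth (f t))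
  (hg_cv : forall t, (t < N)%N -> convex (g t))
  (hg_sm : forall t, (t < N)%N -> smooth (g t))
  (xe : nat -> 'cV[R]_n) (ue : nat -> 'cV[R]_m)
  (hss : forall t, (t < N)%N -> optimal_steady_state A B (f t) (g t) (xe t) (ue t))
  (h : nat -> 'cV[R]_n -> R)
  (hbias : forall t, (t < N)%N ->
     bias_function A B (f t) (g t) (f t (xe t) + g t (ue t)) (h t))
  (xs : nat -> 'cV[R]_n) (us : nat -> 'cV[R]_m)
  (hopt : offline_optimal A B N x0 f g xs us) :
  let lam := fun t => f t (xe t) + g t (ue t) in
  let Jstar := cost N f g xs us in
  let xs' := fun t : nat => if t == 0%N then x0 else xs t in
  \sum_(t < N) lam t - Jstar <=
    \sum_(1 <= t < N.+1) (hprev N h f t (xs t) - hext N h f t (xs t)) - h 0%N x0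
  /\
  \sum_(1 <= t < N.+1) (hprev N h f t (xs t) - hext N h f t (xs t)) - h 0%N x0
  = \sum_(0 <= t < N.+1) (hprev N h f t (xs' t) - hext N h f t (xs' t)).
Proof.
move=> lam Jstar xs'.
have [hfeas _] := hopt.
have hx0 : xs 0%N = x0 by case: hfeas.
split; last exact: bias_sum_from0.
rewrite -hx0 -bias_telescope //.
exact: sum_stage_bound hfeas hbias.
Qed.
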